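(* For every $x_G\in\mathcal{X}_G$, $$\underline{P}^{\mathrm{irr}}_G(x_G)=\prod_{s\in G}\underline{P}_{s\mid x_{P(s)}}(x_s)\quad\text{and}\quad\overline{P}^{\mathrm{irr}}_G(x_G)=\prod_{s\in G}\overline{P}_{s\mid x_{P(s)}}(x_s),$$ where $x_s$ and $x_{P(s)}$ are the restrictions of $x_G$.
   Context: Setting: $G$ is a finite set of nodes forming a DAG; node $s$ carries a variable $X_s$ with finite nonempty state space $\mathcal{X}_s$; $\mathcal{X}_S=\times_{s\in S}\mathcal{X}_s$. $P(s)$: parents; $D(s)$: the set of nodes reachable from $s$ by a directed path of positive length; $N(s)=G\setminus(\{s\}\cup D(s))$. Local models: for every $s$ and $x_{P(s)}$, $\mathcal{M}_{s\mid x_{P(s)}}$ is a nonempty closed convex set of probability mass functions on $\mathcal{X}_s$; local lower/upper probabilities are $\underline{P}_{s\mid x_{P(s)}}(x_s)=\min\{p(x_s):p\in\mathcal{M}_{s\mid x_{P(s)}}\}$ and $\overline{P}_{s\mid x_{P(s)}}(x_s)=\max\{p(x_s):p\in\mathcal{M}_{s\mid x_{P(s)}}\}$. Full conditional probability measure on finite $\Omega$: $(A,B)\mapsto P(A\mid B)$ ($B\ne\emptyset$), (F1) $P(\cdot\mid B)$ a probability measure with $P(B\mid B)=1$; (F2) $P(A\cap C\mid B)=P(A\mid C\cap B)P(C\mid B)$ if $C\cap B\ne\emptyset$. The event $x_S$ is $\{z_G:z_S=x_S\}$; $P(A)=P(A\mid\mathcal{X}_G)$. Irrelevant natural extension $\mathcal{F}^{\mathrm{irr}}_G$: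 all full conditional probability measures $P$ on $\mathcal{X}_G$ with $P(X_s\mid x_{N(s)})\in\mathcal{M}_{s\mid x_{P(s)}}$ for all $s,x_{N(s)}$. $\underline{P}^{\mathrm{irr}}_G(A)=\inf\{P(A):P\in\mathcal{F}^{\mathrm{irr}}_G\}$ and $\overline{P}^{\mathrm{irr}}_G(A)=\sup\{P(A):P\in\mathcal{F}^{\mathrm{irr}}_G\}$. *)

From mathcomp Require Import all_boot.
From Stdlib Require Import Reals.
Set Implicit Arguments. Unset Strict Implicit. Unset Printing Implicit Defensive.
Open Scope R_scope.

Definition edge (G : finType) (par : G -> {set G}) : rel G :=
  fun u v => u \in par v.

Definition desc (G : finType) (par : G -> {set G}) (s : G) : {set G} :=
  [set t | [exists u, edge par s u && connect (edge par) u t]].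

Definition acyclic (G : finType) (par : G -> {set G}) : Prop :=
  forall s, s \notin desc par s.

Definition nondesc (G : finType) (par : G -> {set G}) (s : G) : {set G} :=
  ~: (s |: desc par s).

Definition config (G : finType) (X : G -> finType) : finType :=
  {dffun forall s : G, X s}.

Definition agree_on (G : finType) (X : G -> finType) (S : {set G})
  (x y : config X) : Prop := forall t, t \in S -> x t = y t.

Definition ev (G : finType) (X : G -> finType) (S : {set G}) (x : config X)
  : {set config X} := [set z : config X | [forall t in S, z t == x t]].

Definition ev1 (G : finType) (X : G -> finType) (s : G) (xs : X s)
  : {set config X} := [set z : config X | z s == xs].

Definition is_pmf (T : finType) (p : T -> R) : Prop :=
  (forall t, 0 <= p t) /\ \big[Rplus/0]_(t : T) p t = 1.

Definition convex_set (T : finType) (M : (T -> R) -> Prop) : Prop :=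
  forall p q l, M p -> M q -> 0 <= l <= 1 ->
    M (fun t => l * p t + (1 - l) * q t).

(* Closed in R^T (finite dimensional, so pointwise convergence = Euclidean). *)
Definition closed_set (T : finType) (M : (T -> R) -> Prop) : Prop :=
  forall (u : nat -> T -> R) (p : T -> R),
    (forall n, M (u n)) -> (forall t, Un_cv (fun n => u n t) (p t)) -> M p.

Definition credal_set (T : finType) (M : (T -> R) -> Prop) : Prop :=
  (exists p, M p) /\ (forall p, M p -> is_pmf p) /\ convex_set M /\ closed_set M.

Definition full_cond_prob (O : finType) (P : {set O} -> {set O} -> R) : Prop :=
  (forall B : {set O}, B != set0 ->
     (forall A : {set O}, 0 <= P A B) /\ P setT B = 1 /\
     (forall A1 A2 : {set O}, [disjoint A1 & A2] -> P (A1 :|: A2) B = P A1 B + P A2 B) /\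
     P B B = 1) /\
  (forall A B C : {set O}, C :&: B != set0 -> P (A :&: C) B = P A (C :&: B) * P C B).

(* Membership in the irrelevant natural extension F^irr_G.
   The local model M s x depends only on x_{P(s)} (see mainTheorem12). *)
Definition irr_ext (G : finType) (X : G -> finType) (par : G -> {set G})
  (M : forall s : G, config X -> (X s -> R) -> Prop)
  (P : {set config X} -> {set config X} -> R) : Prop :=
  full_cond_prob P /\
  forall (s : G) (x : config X),
    M s x (fun xs : X s => P (ev1 xs) (ev (nondesc par s) x)).

Definition is_inf (E : R -> Prop) (m : R) : Prop :=
  (forall y, E y -> m <= y) /\ (forall b, (forall y, E y -> b <= y) -> b <= m).

Definition is_sup (E : R -> Prop) (m : R) : Prop :=
  (forall y, E y -> y <= m) /\ (forall b, (forall y, E y -> y <= b) -> m <= b).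

From mathcomp Require Import all_boot.
From Stdlib Require Import Reals Lra ClassicalEpsilon FunctionalExtensionality.
From mathcomp Require Import Rstruct.
Open Scope R_scope.
Set Implicit Arguments. Unset Strict Implicit. Unset Printing Implicit Defensive.

(* Every P in the irrelevant natural extension obeys the chain rule along the
   DAG: for an ancestral set A and a node s of A with no child in A,
   P(x_A) = P(x_s | x_{A\s}) P(x_{A\s}).  As A\s consists of nondescendants
   of s and contains its parents, P(x_s | x_{A\s}) is a convex combination of
   the conditionals P(x_s | z_{N(s)}) with z_{P(s)} = x_{P(s)}, which lie in
   the local credal set; hence it lies between the local lower and upper
   probabilities, and so does P(x_G) between their products.  Conversely,
   choose local pmfs attaining the bounds at x.  Their Bayesian-network
   product, made a full conditional probability by conditioning on the
   configurations with the fewest vanishing factors, belongs to the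
   irrelevant natural extension and attains the product of the bounds. *)

Lemma sumR_ge0 (I : finType) (A : pred I) (F : I -> R) :
  (forall i, A i -> 0 <= F i) -> 0 <= \big[Rplus/0]_(i in A) F i.
Proof. by move=> F0; apply: (big_ind (Rle 0)) => // [|a b]; lra. Qed.

Lemma sumR_gt0 (I : finType) (A : {set I}) (F : I -> R) :
  A != set0 -> (forall i, 0 < F i) -> 0 < \big[Rplus/0]_(i in A) F i.
Proof.
case/set0Pn => a aA F0; rewrite (bigD1 a aA) /=.
by apply: Rplus_lt_le_0_compat => //; apply: sumR_ge0 => i _; apply: Rlt_le.
Qed.

Lemma prodR_ge0 (I : finType) (A : pred I) (F : I -> R) :
  (forall i, 0 <= F i) -> 0 <= \big[Rmult/1]_(i in A) F i.
Proof. by move=> F0; apply: (big_ind (Rle 0)) => // [|a b]; [lra | apply: Rmult_le_pos]. Qed.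

Lemma prodR_gt0 (I : finType) (A : pred I) (F : I -> R) :
  (forall i, 0 < F i) -> 0 < \big[Rmult/1]_(i in A) F i.
Proof. by move=> F0; apply: (big_ind (Rlt 0)) => // [|a b]; [lra | apply: Rmult_lt_0_compat]. Qed.

Lemma prodR_setT (I : finType) (F : I -> R) :
  \big[Rmult/1]_(i in [set: I]) F i = \big[Rmult/1]_(i : I) F i.
Proof. by apply: eq_bigl => i; rewrite in_setT. Qed.

Lemma convex_comb_bounds (I : finType) (A : pred I) (w v : I -> R) (l u : R) :
  (forall i, A i -> 0 <= w i) -> \big[Rplus/0]_(i in A) w i = 1 ->
  (forall i, A i -> l <= v i <= u) ->
  l <= \big[Rplus/0]_(i in A) (w i * v i) <= u.
Proof.
move=> w0 w1 hv; have lin c : \big[Rplus/0]_(i in A) (w i * c) = c.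
  by rewrite -big_distrl /= w1 Rmult_1_l.
split.
  rewrite -{1}(lin l); apply: (big_ind2 Rle) => [|*|i Ai]; [lra | lra |].
  by apply: Rmult_le_compat_l; [apply: w0 | case: (hv i Ai)].
rewrite -[X in _ <= X](lin u); apply: (big_ind2 Rle) => [|*|i Ai]; [lra | lra |].
by apply: Rmult_le_compat_l; [apply: w0 | case: (hv i Ai)].
Qed.

Definition nzpart (r : R) : R := if r == 0 then 1 else r.

Lemma nzpart_gt0 r : 0 <= r -> 0 < nzpart r.
Proof.
move=> r0; rewrite /nzpart; case: eqP => [_|rn0]; first lra.
by case: (Rle_lt_or_eq_dec _ _ r0) => // e; case: rn0.
Qed.

Lemma prodR_neq0 (I : finType) (A : pred I) (F : I -> R) :
  (\big[Rmult/1]_(i in A) F i != 0) = (\big[addn/0%nat]_(i in A) (F i == 0) == 0%nat).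
Proof.
rewrite sum_nat_eq0; apply/idP/forall_inP => [P0 i Ai | F0].
  case: (F i =P 0) => [Fi0 | //].
  by move: P0; rewrite (bigD1 i Ai) /= Fi0 Rmult_0_l eqxx.
apply/eqP; apply: (big_ind (fun r => r <> 0)) => [|a b|i Ai]; first lra.
  exact: Rmult_integral_contrapositive_currified.
by move: (F0 i Ai); case: (F i =P 0).
Qed.

Lemma prodR_nzpart (I : finType) (A : pred I) (F : I -> R) :
  \big[Rmult/1]_(i in A) F i != 0 ->
  \big[Rmult/1]_(i in A) nzpart (F i) = \big[Rmult/1]_(i in A) F i.
Proof.
rewrite prodR_neq0 sum_nat_eq0 => /forall_inP F0; apply: eq_bigr => i Ai.
by rewrite /nzpart; move: (F0 i Ai); case: (F i =P 0).
Qed.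

Lemma is_inf_min (E : R -> Prop) m : (forall v, E v -> m <= v) -> E m -> is_inf E m.
Proof. by move=> m_low Em; split=> // b; apply. Qed.

Lemma is_sup_max (E : R -> Prop) m : (forall v, E v -> v <= m) -> E m -> is_sup E m.
Proof. by move=> m_up Em; split=> // b; apply. Qed.

Section Dag.
Variables (G : finType) (par : G -> {set G}).
Hypothesis dag : acyclic par.

Definition parent_closed (A : {set G}) := forall t u, t \in A -> u \in par t -> u \in A.
Definition child_closed (S : {set G}) := forall a b, a \in S -> a \in par b -> b \in S.

Lemma desc_par s u : s \in par u -> u \in desc par s.
Proof. by move=> su; rewrite inE; apply/existsP; exists u; rewrite /edge su connect0. Qed.

Lemma subset_desc a s : a \in desc par s -> desc par a \subset desc par s.
Proof.
rewrite inE => /existsP [w /andP [sw wa]].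
apply/subsetP => t; rewrite !inE => /existsP [v /andP [av vt]].
apply/existsP; exists w; rewrite sw /=.
by apply: connect_trans wa _; apply: connect_trans vt; apply: connect1.
Qed.

Lemma desc_child_closed s : child_closed (desc par s).
Proof. by move=> a b ha ab; apply: (subsetP (subset_desc ha)); apply: desc_par. Qed.

Lemma desc1_child_closed s : child_closed (s |: desc par s).
Proof.
move=> a b; rewrite !in_setU1 => /predU1P [-> | ha] ab; apply/orP; right.
  exact: desc_par.
exact: desc_child_closed ha ab.
Qed.

Lemma notin_par s : s \notin par s.
Proof. by apply: contraNN (dag s); apply: desc_par. Qed.

Lemma card_desc_par s u : s \in par u -> (#|desc par u| < #|desc par s|)%nat.
Proof.
move=> su; apply/proper_card/properP; split; first exact: subset_desc (desc_par su).
by exists u; [apply: desc_par | apply: dag].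
Qed.

(* Minimising (maximising) the number of descendants finds a node with no
   child (parent) in the set. *)
Lemma exists_sink (A : {set G}) :
  A != set0 -> exists2 s, s \in A & forall w, w \in A -> s \notin par w.
Proof.
case/set0Pn => a aA; case: (arg_minnP (fun t => #|desc par t|) aA) => s sA smin.
exists s => // w wA; apply/negP => sw.
by have := leq_trans (card_desc_par sw) (smin w wA); rewrite ltnn.
Qed.

Lemma exists_source (S : {set G}) :
  S != set0 -> exists2 t, t \in S & forall u, u \in S -> u \notin par t.
Proof.
case/set0Pn => a aS; case: (arg_maxnP (fun t => #|desc par t|) aS) => t tS tmax.
exists t => // u uS; apply/negP => ut.
by have := leq_trans (card_desc_par ut) (tmax u uS); rewrite ltnn.
Qed.

Lemma parent_closedD1 (A : {set G}) s : parent_closed A ->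
  (forall w, w \in A -> s \notin par w) -> parent_closed (A :\ s).
Proof.
move=> hA sink t u; rewrite !in_setD1 => /andP [ts tA] ut.
by rewrite (hA t u tA ut) andbT; apply: contraTneq ut => ->; apply: sink.
Qed.

Lemma child_closedD1 (S : {set G}) t : child_closed S ->
  (forall u, u \in S -> u \notin par t) -> child_closed (S :\ t).
Proof.
move=> hS source a b; rewrite !in_setD1 => /andP [ta aS] ab.
by rewrite (hS a b aS ab) andbT; apply: contraTneq ab => ->; apply: source.
Qed.

Lemma parent_closed_connect (A : {set G}) w t :
  parent_closed A -> connect (edge par) w t -> t \in A -> w \in A.
Proof.
move=> hA /connectP [p pth ->]; elim: p w pth => //= v p IH w /andP [wv pth] vA.
exact: hA (IH v pth vA) wv.
Qed.

Lemma sink_nondesc (A : {set G}) s : parent_closed A ->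
  (forall w, w \in A -> s \notin par w) -> A :\ s \subset nondesc par s.
Proof.
move=> hA sink; apply/subsetP => t; rewrite in_setD1 => /andP [ts tA].
rewrite inE in_setU1 negb_or ts inE; apply/existsP => -[w /andP [sw wt]].
exact: (negP (sink w (parent_closed_connect hA wt tA)) sw).
Qed.

Lemma par_subset_setD1 (A : {set G}) s : parent_closed A -> s \in A ->
  par s \subset A :\ s.
Proof.
move=> hA sA; apply/subsetP => u us; rewrite in_setD1 (hA s u sA us) andbT.
by apply: contraTneq us => ->; apply: notin_par.
Qed.

Lemma par_notin_desc1 s u : u \in par s -> u \notin s |: desc par s.
Proof.
move=> us; rewrite in_setU1 negb_or; apply/andP; split.
  by apply: contraTneq us => ->; apply: notin_par.
by apply: contraNN (dag s) => /desc_child_closed; apply.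
Qed.

End Dag.

Section FullConditional.
Variables (O : finType) (P : {set O} -> {set O} -> R).
Hypothesis fcp : full_cond_prob P.

Lemma fcp_ge0 (A B : {set O}) : B != set0 -> 0 <= P A B.
Proof. by move=> B0; apply: (fcp.1 B B0).1. Qed.

Lemma fcp_id (B : {set O}) : B != set0 -> P B B = 1.
Proof. by move=> B0; case: (fcp.1 B B0) => _ [_ [_ ->]]. Qed.

Lemma fcp_setU (A1 A2 B : {set O}) : B != set0 -> [disjoint A1 & A2] ->
  P (A1 :|: A2) B = P A1 B + P A2 B.
Proof. by move=> B0; case: (fcp.1 B B0) => _ [_ [h _]]; apply: h. Qed.

Lemma fcp_setI (A B C : {set O}) : C :&: B != set0 ->
  P (A :&: C) B = P A (C :&: B) * P C B.
Proof. exact: fcp.2. Qed.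

Lemma fcp_set0 (B : {set O}) : B != set0 -> P set0 B = 0.
Proof.
move=> B0; have := fcp_setU (A1 := set0) (A2 := set0) B0.
by rewrite setU0 -setI_eq0 setI0 eqxx => /(_ isT); lra.
Qed.

Lemma fcp_setIr (A B : {set O}) : B != set0 -> P (A :&: B) B = P A B.
Proof. by move=> B0; rewrite fcp_setI setIid ?fcp_id ?Rmult_1_r. Qed.

Lemma fcp_sum1 (A B : {set O}) : B != set0 ->
  P A B = \big[Rplus/0]_(w in A :&: B) P [set w] B.
Proof.
move=> B0; rewrite -fcp_setIr //; move: (A :&: B) => S.
elim: {S}_.+1 {-2}S (ltnSn #|S|) => // n IH S.
case: (set_0Vmem S) => [-> _|[w wS]]; first by rewrite big_set0 fcp_set0.
rewrite (cardsD1 w S) wS ltnS => cardS.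
rewrite (big_setD1 w wS) /= -IH // -fcp_setU ?setD1K //.
by rewrite disjoints1 in_setD1 eqxx.
Qed.

Lemma fcp_point_factor (y : O) (C B : {set O}) : y \in C -> C \subset B ->
  P [set y] B = P [set y] C * P C B.
Proof.
move=> yC CB; have CB0 : C :&: B != set0 by rewrite (setIidPl CB); apply/set0Pn; exists y.
by rewrite -{1}(setIidPl (_ : [set y] \subset C)) ?sub1set // fcp_setI // (setIidPl CB).
Qed.

Variable cls : O -> {set O}.
Hypothesis mem_cls : forall y, y \in cls y.
Hypothesis cls_eq : forall y w, w \in cls y -> cls w = cls y.

Lemma mem_cls_sym y w : (w \in cls y) = (y \in cls w).
Proof. by apply/idP/idP => h; rewrite (cls_eq h) mem_cls. Qed.

Lemma fcp_total (E B : {set O}) : B != set0 ->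
  (forall y, y \in B -> cls y \subset B) ->
  P E B = \big[Rplus/0]_(y in B) (P [set y] B * P E (cls y)).
Proof.
move=> B0 clsB.
have cls0 y : cls y != set0 by apply/set0Pn; exists y.
have pair_eq y w : y \in B -> w \in cls y ->
    P [set y] B * P [set w] (cls y) = P [set y] (cls w) * P [set w] B.
  move=> yB wy; have wB := subsetP (clsB y yB) w wy.
  rewrite (fcp_point_factor (mem_cls y) (clsB y yB)).
  rewrite (fcp_point_factor (mem_cls w) (clsB w wB)) (cls_eq wy); ring.
transitivity (\big[Rplus/0]_(w in E :&: B)
    \big[Rplus/0]_(y in cls w) (P [set y] (cls w) * P [set w] B)).
  rewrite (fcp_sum1 E B0); apply: eq_bigr => w _.
  rewrite -big_distrl /=; have -> : \big[Rplus/0]_(y in cls w) P [set y] (cls w) = 1.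
    by rewrite -(fcp_id (cls0 w)) (fcp_sum1 _ (cls0 w)) setIid.
  by rewrite Rmult_1_l.
transitivity (\big[Rplus/0]_(y in B)
    \big[Rplus/0]_(w in E :&: cls y) (P [set y] B * P [set w] (cls y))).
  rewrite (exchange_big_dep (mem B)) /= => [|w y /setIP [_ wB]]; last first.
    exact: (subsetP (clsB w wB)).
  apply: eq_bigr => y yB; apply: eq_big => w.
    rewrite !in_setI -mem_cls_sym; case wy: (w \in cls y); rewrite ?andbF //.
    by rewrite (subsetP (clsB y yB) w wy) !andbT.
  by move=> /andP [_ yw]; rewrite pair_eq // mem_cls_sym.
apply: eq_bigr => y yB; rewrite (fcp_sum1 E (cls0 y)) big_distrr.
by apply: eq_bigr.
Qed.

Lemma fcp_bounds_by_classes (E B : {set O}) (l u : R) : B != set0 ->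
  (forall y, y \in B -> cls y \subset B) ->
  (forall y, y \in B -> l <= P E (cls y) <= u) ->
  l <= P E B <= u.
Proof.
move=> B0 clsB hb; rewrite (fcp_total E B0 clsB).
apply: convex_comb_bounds => // [y _|]; first exact: fcp_ge0.
by rewrite -(fcp_id B0) (fcp_sum1 B B0) setIid.
Qed.

End FullConditional.

Section Layered.
Variables (O : finType) (c : O -> R) (k : O -> nat).
Hypothesis c_gt0 : forall y, 0 < c y.

Definition layer (B : {set O}) : {set O} :=
  [set y in B | [forall z in B, leq (k y) (k z)]].

Definition layer_prob (A B : {set O}) : R :=
  \big[Rplus/0]_(y in A :&: layer B) c y / \big[Rplus/0]_(y in layer B) c y.

Lemma mem_layer (B : {set O}) y :
  (y \in layer B) = (y \in B) && [forall z in B, leq (k y) (k z)].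
Proof. by rewrite inE. Qed.

Lemma layer_sub (B : {set O}) : layer B \subset B.
Proof. by apply/subsetP => y /setIdP []. Qed.

Lemma layer_neq0 (B : {set O}) : B != set0 -> layer B != set0.
Proof.
case/set0Pn => b bB; case: (arg_minnP k bB) => y yB ymin.
by apply/set0Pn; exists y; rewrite inE; apply/andP; split => //; apply/forall_inP.
Qed.

Lemma layerI (B C : {set O}) : C :&: layer B != set0 ->
  layer (C :&: B) = C :&: layer B.
Proof.
case/set0Pn => y /setIP [yC /setIdP [yB /forall_inP ymin]].
apply/setP => z; rewrite !inE; case zC: (z \in C); case zB: (z \in B) => //=.
apply/forall_inP/forall_inP => [zmin w wB | zmin w /setIP [_ wB]]; last exact: zmin.
by apply: leq_trans (ymin w wB); apply: zmin; rewrite inE yC yB.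
Qed.

Lemma layer_prob_fcp : full_cond_prob layer_prob.
Proof.
have D_gt0 B : B != set0 -> 0 < \big[Rplus/0]_(y in layer B) c y.
  by move=> B0; apply: sumR_gt0 => //; apply: layer_neq0.
split=> [B B0 | A B C CB0].
  have D0 := D_gt0 B B0; rewrite /layer_prob; split; [|split; [|split]].
  - move=> A; apply: Rmult_le_pos; last exact/Rlt_le/Rinv_0_lt_compat.
    by apply: sumR_ge0 => y _; apply: Rlt_le.
  - by rewrite setTI /Rdiv Rinv_r //; apply: Rgt_not_eq.
  - move=> A1 A2 A12; rewrite -Rdiv_plus_distr -bigU /=.
      by congr (_ / _); apply: eq_bigl => y; rewrite setIUl in_setU.
    by apply: (disjointWl (subsetIl _ _)); apply: (disjointWr (subsetIl _ _)).
  - by rewrite (setIidPr (layer_sub B)) /Rdiv Rinv_r //; apply: Rgt_not_eq.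
have B0 : B != set0 by apply: contraNneq CB0 => ->; rewrite setI0.
rewrite /layer_prob; case: (eqVneq (C :&: layer B) set0) => [CL0 | CL0].
  by rewrite -setIA CL0 setI0 !big_set0 /Rdiv !Rmult_0_l Rmult_0_r.
have CLpos := D_gt0 _ CB0; rewrite layerI // in CLpos *.
have := D_gt0 B B0; rewrite -setIA => D0; field; lra.
Qed.

End Layered.

Section Events.
Variables (G : finType) (X : G -> finType).
Implicit Types (S : {set G}) (x y z : config X).

Lemma evP S y z : reflect (agree_on S y z) (y \in ev S z).
Proof. by rewrite inE; apply: (iffP forall_inP) => h t tS; apply/eqP/h. Qed.

Lemma ev_self S x : x \in ev S x.
Proof. exact/evP. Qed.

Lemma ev_neq0 S x : ev S x != set0.
Proof. by apply/set0Pn; exists x; apply: ev_self. Qed.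

Lemma ev_eq S y z : y \in ev S z -> ev S y = ev S z.
Proof.
by move=> /evP yz; apply/setP => w; apply/evP/evP => wy t tS; rewrite wy ?yz.
Qed.

Lemma ev_set0 x : ev set0 x = setT.
Proof. by apply/setP => y; rewrite in_setT; apply/evP => t; rewrite in_set0. Qed.

Lemma ev_setT x : ev setT x = [set x].
Proof.
apply/setP => y; rewrite inE; apply/evP/eqP => [yx | -> //].
by apply/ffunP => t; apply: yx; rewrite in_setT.
Qed.

Lemma ev_setD1 S x s : s \in S -> ev S x = ev1 (x s) :&: ev (S :\ s) x.
Proof.
move=> sS; apply/setP => y; rewrite in_setI [y \in ev1 _]inE.
apply/evP/andP => [yx | [/eqP ys /evP yx] t tS].
  by split; [apply/eqP/yx | apply/evP => t /setD1P [_ /yx]].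
by case: (eqVneq t s) => [-> // | ts]; apply: yx; rewrite in_setD1 ts.
Qed.

End Events.

Section ChainRule.
Variables (G : finType) (X : G -> finType) (par : G -> {set G}).
Hypothesis dag : acyclic par.
Variables (P : {set config X} -> {set config X} -> R) (x : config X) (L U : G -> R).
Hypothesis fcp : full_cond_prob P.
Hypothesis L0 : forall s, 0 <= L s.
Hypothesis local_bounds : forall s (z : config X), agree_on (par s) z x ->
  L s <= P (ev1 (x s)) (ev (nondesc par s) z) <= U s.

Lemma sink_cond_bounds (A : {set G}) s : parent_closed par A -> s \in A ->
  (forall w, w \in A -> s \notin par w) ->
  L s <= P (ev1 (x s)) (ev (A :\ s) x) <= U s.
Proof.
move=> hA sA sink; have AN := sink_nondesc hA sink.
apply: (fcp_bounds_by_classes fcp (cls := fun y => ev (nondesc par s) y)).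
- exact: ev_self.
- by move=> y w /ev_eq.
- exact: ev_neq0.
- move=> y /evP yx; apply/subsetP => w /evP wy; apply/evP => t tA.
  by rewrite wy ?yx // (subsetP AN).
- move=> y /evP yx; apply: local_bounds => t ts.
  exact/yx/(subsetP (par_subset_setD1 dag hA sA)).
Qed.

Lemma chain_rule_bounds (A : {set G}) : parent_closed par A ->
  \big[Rmult/1]_(t in A) L t <= P (ev A x) setT <= \big[Rmult/1]_(t in A) U t.
Proof.
elim: {A}_.+1 {-2}A (ltnSn #|A|) => // n IH A cardA hA.
case: (eqVneq A set0) => [-> | A0].
  by have := fcp_id fcp (ev_neq0 set0 x); rewrite !big_set0 ev_set0 => ->; lra.
have [s sA sink] := exists_sink dag A0.
have hA' := parent_closedD1 hA sink.
have [IHL IHU] : \big[Rmult/1]_(t in A :\ s) L t <= P (ev (A :\ s) x) setT <=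
                 \big[Rmult/1]_(t in A :\ s) U t.
  by apply: IH => //; move: cardA; rewrite (cardsD1 s A) sA.
have [condL condU] := sink_cond_bounds hA sA sink.
rewrite (ev_setD1 x sA) (fcp_setI fcp); last by rewrite setIT ev_neq0.
rewrite setIT !(big_setD1 s sA) /=.
split; first by apply: Rmult_le_compat => //; apply: prodR_ge0.
apply: Rmult_le_compat => //; apply: (fcp_ge0 fcp); first exact: ev_neq0.
by apply/set0Pn; exists x.
Qed.

End ChainRule.

Section BayesNet.
Variables (G : finType) (X : G -> finType) (par : G -> {set G}).
Hypothesis dag : acyclic par.
Variable q : forall t : G, config X -> X t -> R.
Arguments q : clear implicits.
Hypothesis q_pmf : forall (t : G) (y : config X), is_pmf (q t y).
Hypothesis q_local : forall (t : G) (y y' : config X),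
  agree_on (par t) y y' -> q t y = q t y'.

Definition factor (t : G) (y : config X) : R := q t y (y t).

Definition cfg_set (z : config X) (t : G) (b : X t) : config X :=
  finfun (dfwith (fun u => z u) b).

Definition zero_count (A : {set G}) (y : config X) : nat :=
  \big[addn/0%nat]_(t in A) (factor t y == 0).

Definition nz_weight (A : {set G}) (y : config X) : R :=
  \big[Rmult/1]_(t in A) nzpart (factor t y).

Definition bn_prob := layer_prob (nz_weight setT) (zero_count setT).

Lemma factor_ge0 t y : 0 <= factor t y.
Proof. exact: (q_pmf t y).1. Qed.

Lemma nz_weight_gt0 A y : 0 < nz_weight A y.
Proof. by apply: prodR_gt0 => t; apply/nzpart_gt0/factor_ge0. Qed.

Lemma bn_prob_fcp : full_cond_prob bn_prob.
Proof. exact/layer_prob_fcp/nz_weight_gt0. Qed.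

Lemma q_eq_outside (S : {set G}) z y t : (forall u, u \in par t -> u \notin S) ->
  y \in ev (~: S) z -> q t y = q t z.
Proof. by move=> parS /evP yz; apply: q_local => u ut; apply: yz; rewrite inE parS. Qed.

Lemma mem_ev_cfg_set (S : {set G}) z t (b : X t) y : t \in S ->
  (y \in ev (~: (S :\ t)) (cfg_set z b)) = (y \in ev (~: S) z) && (y t == b).
Proof.
move=> tS; apply/evP/andP => [yz | [/evP yz /eqP yt] u].
  split; last by rewrite yz ?ffunE ?dfwith_in // !inE eqxx.
  apply/evP => u; rewrite inE => uS.
  rewrite yz ?ffunE ?dfwith_out //; last by rewrite !inE negb_and uS orbT.
  by apply: contraNneq uS => <-.
rewrite !inE negb_and negbK => /orP [/eqP -> | uS]; first by rewrite ffunE dfwith_in.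
by rewrite ffunE dfwith_out ?yz ?inE //; apply: contraNneq uS => <-.
Qed.

Lemma sum_prod_factor (S : {set G}) z : child_closed par S ->
  \big[Rplus/0]_(y in ev (~: S) z) \big[Rmult/1]_(t in S) factor t y = 1.
Proof.
elim: {S}_.+1 {-2}S (ltnSn #|S|) z => // n IH S cardS z hS.
case: (eqVneq S set0) => [-> | S0]; first by rewrite setC0 ev_setT big_set1 big_set0.
have [t tS source] := exists_source dag S0.
have parS u : u \in par t -> u \notin S := contraTN (source u).
transitivity (\big[Rplus/0]_(y in ev (~: S) z)
               (q t z (y t) * \big[Rmult/1]_(u in S :\ t) factor u y)).
  apply: eq_bigr => y yB.
  by rewrite (big_setD1 t tS) /= /factor (q_eq_outside parS yB).
rewrite (partition_big (fun y : config X => y t) predT) //=.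
rewrite -[RHS](q_pmf t z).2; apply: eq_bigr => b _.
transitivity (q t z b * \big[Rplus/0]_(y in ev (~: (S :\ t)) (cfg_set z b))
                           \big[Rmult/1]_(u in S :\ t) factor u y).
  rewrite big_distrr /=; apply: eq_big => [y | y /andP [_ /eqP -> //]].
  by rewrite mem_ev_cfg_set.
rewrite IH ?Rmult_1_r //; first by move: cardS; rewrite (cardsD1 t S) tS.
exact: child_closedD1.
Qed.

Section ConditionOutside.
Variables (S : {set G}) (z : config X).
Hypothesis hS : child_closed par S.

Let mass (y : config X) := \big[Rmult/1]_(t in S) factor t y.

Lemma factor_outside y t : y \in ev (~: S) z -> t \notin S -> factor t y = factor t z.
Proof.
move=> yz tS; have parS u : u \in par t -> u \notin S.
  by move=> ut; apply: contraNN tS => /hS; apply.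
by rewrite /factor (q_eq_outside parS yz); move/evP: yz => ->; rewrite ?inE.
Qed.

Lemma zero_count_split y : y \in ev (~: S) z ->
  zero_count setT y = (zero_count (~: S) z + zero_count S y)%nat.
Proof.
move=> yz; rewrite /zero_count (big_setID S) setTI setTD addnC; congr addn.
by apply: eq_bigr => t /[1!inE] tS; rewrite (factor_outside yz).
Qed.

Lemma nz_weight_split y : y \in ev (~: S) z ->
  nz_weight setT y = nz_weight (~: S) z * nz_weight S y.
Proof.
move=> yz; rewrite /nz_weight (big_setID S) setTI setTD Rmult_comm; congr Rmult.
by apply: eq_bigr => t /[1!inE] tS; rewrite (factor_outside yz).
Qed.

Lemma layer_ev_compl :
  layer (zero_count setT) (ev (~: S) z) = [set y in ev (~: S) z | mass y != 0].
Proof.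
have mass_neq0 y : (mass y != 0) = (zero_count S y == 0%nat) by apply: prodR_neq0.
have [w wz /eqP w0] : exists2 w, w \in ev (~: S) z & zero_count S w == 0%nat.
  apply/exists_inP; apply: contraT => /exists_inPn m0; have := sum_prod_factor z hS.
  rewrite big1 => [/esym/R1_neq_R0 // | y /m0].
  by rewrite -mass_neq0 negbK => /eqP.
apply/setP => y; rewrite mem_layer.
apply/idP/setIdP => [/andP [yz /forall_inP ymin] | [yz]].
  split=> //; move: (ymin w wz).
  by rewrite mass_neq0 -leqn0 !zero_count_split // leq_add2l w0.
rewrite mass_neq0 yz => /eqP y0; apply/forall_inP => v vz.
by rewrite !zero_count_split // leq_add2l y0.
Qed.

(* Outside a child-closed set the factors are constant on the conditioning
   event, so they cancel, and the lowest layer carries all the mass. *)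
Lemma bn_prob_ev_compl (E : {set config X}) :
  bn_prob E (ev (~: S) z) = \big[Rplus/0]_(y in E :&: ev (~: S) z) mass y.
Proof.
have num (F : {set config X}) :
    \big[Rplus/0]_(y in F :&: layer (zero_count setT) (ev (~: S) z))
      nz_weight setT y =
    nz_weight (~: S) z * \big[Rplus/0]_(y in F :&: ev (~: S) z) mass y.
  rewrite layer_ev_compl big_distrr /= [RHS](bigID (fun y => mass y != 0)) /=.
  rewrite [X in _ + X]big1 ?Rplus_0_r => [|y /andP [_ /negPn /eqP ->]];
    last exact: Rmult_0_r.
  apply: eq_big => [y | y /setIP [_ /setIdP [yz my]]]; first by rewrite !inE andbA.
  by rewrite nz_weight_split //; congr (_ * _); apply: prodR_nzpart.
rewrite /bn_prob /layer_prob num -[layer _ _]setTI num setTI sum_prod_factor //.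
by have W0 := nz_weight_gt0 (~: S) z; field; lra.
Qed.

End ConditionOutside.

Lemma bn_prob_irr s z (a : X s) : bn_prob (ev1 a) (ev (nondesc par s) z) = q s z a.
Proof.
have parS := par_notin_desc1 dag (s := s).
have sS : s \in s |: desc par s by rewrite setU11.
rewrite bn_prob_ev_compl; last exact: desc1_child_closed.
transitivity (\big[Rplus/0]_(y in ev (~: ((s |: desc par s) :\ s)) (cfg_set z a))
    (q s z a * \big[Rmult/1]_(t in (s |: desc par s) :\ s) factor t y)).
  apply: eq_big => [y | y /setIP [/[1!inE] /eqP ys yz]].
    by rewrite mem_ev_cfg_set // in_setI andbC [y \in ev1 a]inE.
  by rewrite (big_setD1 s sS) /= /factor (q_eq_outside parS yz) ys.
rewrite -big_distrr /= setU1K ?(dag s) // sum_prod_factor ?Rmult_1_r //.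
exact: desc_child_closed.
Qed.

Lemma bn_prob_point (x : config X) :
  bn_prob (ev setT x) setT = \big[Rmult/1]_(t : G) q t x (x t).
Proof.
have closedT : child_closed par setT by move=> *; rewrite in_setT.
have := bn_prob_ev_compl x closedT (ev setT x); rewrite setCT ev_set0 => ->.
by rewrite setIT ev_setT big_set1 prodR_setT.
Qed.

End BayesNet.

Section IrrelevantExtension.
Variables (G : finType) (X : G -> finType) (par : G -> {set G}).
Hypothesis dag : acyclic par.
Variable M : forall s : G, config X -> (X s -> R) -> Prop.
Arguments M : clear implicits.
Hypothesis M_local : forall s (x y : config X), agree_on (par s) x y ->
  forall p, M s x p <-> M s y p.
Hypothesis M_credal : forall s (x : config X), credal_set (M s x).
Variable x : config X.

Lemma irr_ext_bounds P (L U : G -> R) : irr_ext par M P -> (forall s, 0 <= L s) ->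
  (forall s p, M s x p -> L s <= p (x s) <= U s) ->
  \big[Rmult/1]_(t : G) L t <= P (ev setT x) setT <= \big[Rmult/1]_(t : G) U t.
Proof.
move=> [fcp irr] L0 LU; rewrite -!prodR_setT.
apply: (chain_rule_bounds dag) => // s z zx.
by apply: (LU s (fun xs => P (ev1 xs) (ev (nondesc par s) z))); apply/(M_local zx).
Qed.

Lemma local_selection (v : G -> R) : (forall s, exists p, M s x p /\ p (x s) = v s) ->
  exists q : forall s, config X -> X s -> R,
    [/\ forall s y, M s y (q s y),
        forall s y y', agree_on (par s) y y' -> q s y = q s y'
      & forall s y, agree_on (par s) y x -> q s y (x s) = v s].
Proof.
move=> Mv; have pick s (y : config X) : {p | M s y p /\ (y = x -> p (x s) = v s)}.
  apply: constructive_indefinite_description.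
  have [p [Mp pv]] := Mv s; have [[p' Mp'] _] := M_credal s y.
  case: (eqVneq y x) => [-> | /eqP yx]; first by exists p.
  by exists p'; split=> // /yx.
pose proj s (y : config X) : config X := [ffun u => if u \in par s then y u else x u].
have proj_eq s y y' : agree_on (par s) y y' -> proj s y = proj s y'.
  by move=> yy'; apply/ffunP => u; rewrite !ffunE; case: ifP => // /yy'.
have proj_agree s y : agree_on (par s) (proj s y) y by move=> u us; rewrite ffunE us.
exists (fun s y => sval (pick s (proj s y))).
split=> [s y | s y y' /proj_eq -> // | s y yx].
  by apply/(M_local (proj_agree s y)); case: (svalP (pick s (proj s y))).
have -> : proj s y = x.
  by rewrite (proj_eq _ _ _ yx); apply/ffunP => u; rewrite ffunE; case: ifP.
by case: (svalP (pick s x)) => _; apply.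
Qed.

Lemma irr_ext_attains (v : G -> R) : (forall s, exists p, M s x p /\ p (x s) = v s) ->
  exists P, irr_ext par M P /\ \big[Rmult/1]_(t : G) v t = P (ev setT x) setT.
Proof.
case/local_selection => q [Mq q_local qx].
have q_pmf s y : is_pmf (q s y) by have [_ [pmf _]] := M_credal s y; apply: pmf.
exists (bn_prob q); split; last first.
  by rewrite (bn_prob_point dag q_pmf q_local); apply: eq_bigr => t _; rewrite qx.
split=> [|s z]; first exact: bn_prob_fcp.
suff -> : (fun xs => bn_prob q (ev1 xs) (ev (nondesc par s) z)) = q s z by [].
by apply: functional_extensionality => a; apply: bn_prob_irr.
Qed.

End IrrelevantExtension.

Theorem mainTheorem12
  (G : finType) (X : G -> finType) (par : G -> {set G})
  (Hdag : acyclic par)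
  (Hne : forall s : G, (0 < #|X s|)%nat)
  (M : forall s : G, config X -> (X s -> R) -> Prop)
  (Hloc : forall (s : G) (x y : config X), agree_on (par s) x y ->
            forall p, M s x p <-> M s y p)
  (Hcred : forall (s : G) (x : config X), credal_set (M s x))
  (lowP upP : forall s : G, config X -> X s -> R)
  (Hlow : forall (s : G) (x : config X) (xs : X s),
      (exists p, M s x p /\ p xs = lowP s x xs) /\
      (forall p, M s x p -> lowP s x xs <= p xs))
  (Hup : forall (s : G) (x : config X) (xs : X s),
      (exists p, M s x p /\ p xs = upP s x xs) /\
      (forall p, M s x p -> p xs <= upP s x xs)) :
  forall x : config X,
    is_inf (fun v => exists P, irr_ext par M P /\ v = P (ev setT x) setT)
           (\big[Rmult/1]_(s : G) lowP s x (x s)) /\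
    is_sup (fun v => exists P, irr_ext par M P /\ v = P (ev setT x) setT)
           (\big[Rmult/1]_(s : G) upP s x (x s)).
Proof.
move=> x.
have low_ge0 s : 0 <= lowP s x (x s).
  have [[p [Mp <-]] _] := Hlow s x (x s).
  by have [_ [pmf _]] := Hcred s x; apply: (pmf p Mp).1.
have bounds P : irr_ext par M P -> \big[Rmult/1]_(s : G) lowP s x (x s) <=
    P (ev setT x) setT <= \big[Rmult/1]_(s : G) upP s x (x s).
  move=> irrP; apply: (irr_ext_bounds Hdag Hloc irrP) => // s p Mp.
  by split; [apply: (Hlow s x (x s)).2 | apply: (Hup s x (x s)).2].
split; [apply: is_inf_min | apply: is_sup_max].
- by move=> _ [P [/bounds [] ? _ ->]].
- by apply: (irr_ext_attains Hdag Hloc Hcred) => s; case: (Hlow s x (x s)).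
- by move=> _ [P [/bounds [] _ ? ->]].
- by apply: (irr_ext_attains Hdag Hloc Hcred) => s; case: (Hup s x (x s)).
Qed.
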